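(* Let $\xi<-6$. There exists $\phi_0\in(0,\pi/4]$ such that for every $\phi\in(0,\phi_0]$ there is $c=c(\xi,\phi)>0$ such that for $z=u+\mathrm{i}v$, $$\operatorname{Re}[2\mathrm{i}\theta(z)]\ge c|v|\ \text{ for } z\in\Omega_{01}\cup\Omega_{02},\qquad \operatorname{Re}[2\mathrm{i}\theta(z)]\le -c|v|\ \text{ for } z\in\Omega_{03}\cup\Omega_{04}.$$
   Context: $\theta(z)=\frac12(z+z^{-1})\big[\xi-2+(z-z^{-1})^2\big]$. For $\xi<-6$ let $\zeta_1=\sqrt{(-\xi-\sqrt{\xi^2-36})/6}\in(0,1)$. With $z=u+\mathrm{i}v$: $\Omega_{01}=\{0<u<\zeta_1/2,\ 0<v<u\tan\phi\}$, $\Omega_{02}=\{-\zeta_1/2<u<0,\ 0<v<|u|\tan\phi\}$, $\Omega_{03}=\{-\zeta_1/2<u<0,\ -|u|\tan\phi<v<0\}$, $\Omega_{04}=\{0<u<\zeta_1/2,\ -u\tan\phi<v<0\}$. *)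

From Stdlib Require Import Reals Lra.
From Coquelicot Require Import Coquelicot.
Open Scope R_scope.

Definition theta (xi : R) (z : C) : C :=
  (/ 2 * (z + / z) * (RtoC xi - 2 + (z - / z) * (z - / z)))%C.

Definition zeta1 (xi : R) : R := sqrt ((- xi - sqrt (xi ^ 2 - 36)) / 6).

Definition Omega01 (xi phi : R) (z : C) : Prop :=
  0 < Re z < zeta1 xi / 2 /\ 0 < Im z < Re z * tan phi.
Definition Omega02 (xi phi : R) (z : C) : Prop :=
  - (zeta1 xi / 2) < Re z < 0 /\ 0 < Im z < Rabs (Re z) * tan phi.
Definition Omega03 (xi phi : R) (z : C) : Prop :=
  - (zeta1 xi / 2) < Re z < 0 /\ - (Rabs (Re z) * tan phi) < Im z < 0.
Definition Omega04 (xi phi : R) (z : C) : Prop :=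
  0 < Re z < zeta1 xi / 2 /\ - (Re z * tan phi) < Im z < 0.

(* Writing z = u + iv and r = |z|^2, one has Re[2i theta(z)] = v (1 - r) P(u^2, v^2) / r^3
   for a polynomial P with P(s, 0) = s (3 s^2 + xi s + 3).  The quadratic factor is positive
   below its smaller root zeta1^2, so on |u| < zeta1/2 it is bounded below by a positive
   constant; in a thin enough cone |v| <= tan(phi) |u| this bound survives the perturbation
   in v, and (1 - r) / r^3 only helps.  Hence Re[2i theta(z)] = v g with g >= c > 0. *)

From Stdlib Require Import Reals Lra.
From Coquelicot Require Import Coquelicot.
Open Scope R_scope.

Definition theta_poly (xi s w : R) : R :=
  (xi - 6) * (s + w) ^ 2 + 3 * s * (s + w + 1) ^ 2 - w * (1 - (s + w)) ^ 2.

Lemma Re_2i_theta xi u v : u ^ 2 + v ^ 2 <> 0 ->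
  Re (2 * Ci * theta xi (u, v))%C
  = v * ((1 - (u ^ 2 + v ^ 2)) * theta_poly xi (u ^ 2) (v ^ 2) / (u ^ 2 + v ^ 2) ^ 3).
Proof.
intros Hr.
unfold theta, theta_poly, Re, Ci, RtoC, Cmult, Cplus, Cminus, Copp, Cinv; simpl.
field; contradict Hr; lra.
Qed.

(* The cone |v| <= sqrt T |u| moves P(s, .) away from its value on the real axis,
   s (3 s^2 + xi s + 3), by at most s T (19 - 3 xi). *)
Lemma theta_poly_lower_bound xi s w T :
  xi < -6 -> 0 < s < 1 -> 0 <= T <= 1 -> 0 <= w <= T * s ->
  s * (3 * s ^ 2 + xi * s + 3 - T * (19 - 3 * xi)) <= theta_poly xi s w.
Proof.
intros Hxi Hs HT Hw. unfold theta_poly.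
assert (Hsq : (s + w) ^ 2 <= (s * (1 + T)) ^ 2) by (apply pow_incr; lra).
assert (Hgrow : (s + 1) ^ 2 <= (s + w + 1) ^ 2) by (apply pow_incr; lra).
assert (Hsmall : w * (1 - (s + w)) ^ 2 <= T * s).
{ assert (Hr : 0 <= s + w <= 2) by nra.
  assert ((1 - (s + w)) ^ 2 <= 1) by nra. nra. }
assert (HT3 : s * (2 * T + T * T) <= 3 * T) by nra.
assert ((xi - 6) * (s * (1 + T)) ^ 2 <= (xi - 6) * (s + w) ^ 2)
  by (apply Rmult_le_compat_neg_l; lra).
assert (3 * s * (s + 1) ^ 2 <= 3 * s * (s + w + 1) ^ 2)
  by (apply Rmult_le_compat_l; lra).
assert ((xi - 6) * s * (3 * T) <= (xi - 6) * s * (s * (2 * T + T * T)))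
  by (apply Rmult_le_compat_neg_l; nra).
nra.
Qed.

Lemma quadratic_lower_bound xi S s :
  xi < -6 -> 0 < S < 1 -> 3 * S ^ 2 + xi * S + 3 = 0 -> 0 <= s <= S / 4 ->
  3 * S / 4 * (- xi - 6) <= 3 * s ^ 2 + xi * s + 3.
Proof.
intros Hxi HS Hroot Hs.
replace (3 * s ^ 2 + xi * s + 3)
  with ((S - s) * (- xi - 3 * (s + S)) + (3 * S ^ 2 + xi * S + 3)) by ring.
rewrite Hroot, Rplus_0_r.
apply Rmult_le_compat; lra.
Qed.

Lemma theta_ratio_lower_bound P c s w :
  0 < s < 1 / 4 -> 0 <= w <= s -> 0 <= c -> c * s <= P ->
  c <= (1 - (s + w)) * P / (s + w) ^ 3.
Proof.
intros Hs Hw Hc HP.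
assert (Hr0 : 0 < (s + w) ^ 3) by (apply pow_lt; lra).
assert (Hr8 : (s + w) ^ 3 <= (2 * s) ^ 3) by (apply pow_incr; lra).
apply Rmult_le_reg_r with ((s + w) ^ 3); [lra|].
unfold Rdiv; rewrite Rmult_assoc, Rinv_l, Rmult_1_r by lra.
assert (c * (s + w) ^ 3 <= c * (2 * s) ^ 3) by (apply Rmult_le_compat_l; lra).
assert ((2 * s) ^ 3 <= s / 2).
{ assert (s * s <= 1 / 16) by nra.
  replace ((2 * s) ^ 3) with (8 * s * (s * s)) by ring. nra. }
assert (c * s / 2 <= (1 - (s + w)) * P).
{ assert (0 <= P) by nra.
  assert (1 / 2 <= 1 - (s + w)) by lra. nra. }
nra.
Qed.

Lemma zeta1_sqr_spec xi : xi < -6 ->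
  let S := zeta1 xi ^ 2 in 0 < S < 1 /\ 3 * S ^ 2 + xi * S + 3 = 0.
Proof.
intros Hxi S.
set (Q := sqrt (xi ^ 2 - 36)).
assert (HQ0 : 0 <= Q) by apply sqrt_pos.
assert (HQ2 : Q ^ 2 = xi ^ 2 - 36) by (apply pow2_sqrt; nra).
assert (HQxi : Q < - xi) by nra.
assert (HS : S = (- xi - Q) / 6) by (apply pow2_sqrt; lra).
rewrite HS. split; [split|]; [lra| nra|].
replace (3 * ((- xi - Q) / 6) ^ 2 + xi * ((- xi - Q) / 6) + 3)
  with ((Q ^ 2 - (xi ^ 2 - 36)) / 12) by field.
rewrite HQ2; field.
Qed.

Lemma atan_in_quarter t : 0 < t <= 1 -> 0 < atan t <= PI / 4.
Proof.
intros Ht. rewrite <- atan_0, <- atan_1. split; [apply atan_increasing; lra|].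
destruct (Rle_lt_or_eq_dec t 1 (proj2 Ht)) as [Hlt | ->]; [|lra].
left; apply atan_increasing; lra.
Qed.

Lemma tan_sqr_le_of_le_atan t phi : 0 < t <= 1 -> 0 < phi <= atan t ->
  tan phi ^ 2 <= t.
Proof.
intros Ht Hphi. pose proof (atan_bound t) as Hatan.
assert (Hpos : 0 < tan phi) by (apply tan_gt_0; lra).
assert (Hle : tan phi <= t).
{ destruct (Rle_lt_or_eq_dec phi (atan t) (proj2 Hphi)) as [Hlt | ->].
  - rewrite <- (tan_atan t). left; apply tan_increasing; lra.
  - rewrite tan_atan; lra. }
nra.
Qed.

Lemma small_angle_tan_sqr a : 0 < a ->
  exists phi0, 0 < phi0 <= PI / 4 /\
    forall phi, 0 < phi <= phi0 -> 0 <= tan phi ^ 2 <= 1 /\ tan phi ^ 2 <= a.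
Proof.
intros Ha.
assert (Ht : 0 < Rmin 1 a <= 1) by (split; [apply Rmin_pos | apply Rmin_l]; lra).
exists (atan (Rmin 1 a)); split; [now apply atan_in_quarter|].
intros phi Hphi.
pose proof (tan_sqr_le_of_le_atan _ _ Ht Hphi) as HT.
pose proof (Rmin_r 1 a). pose proof (pow2_ge_0 (tan phi)). lra.
Qed.

Lemma Omega_upper_sector xi phi z : Omega01 xi phi z \/ Omega02 xi phi z ->
  0 < Im z /\ 0 < Re z ^ 2 < zeta1 xi ^ 2 / 4 /\ Im z ^ 2 <= tan phi ^ 2 * Re z ^ 2.
Proof.
intros [[Hu Hv] | [Hu Hv]]; [|rewrite Rabs_left in Hv by lra]; repeat split; nra.
Qed.

Lemma Omega_lower_sector xi phi z : Omega03 xi phi z \/ Omega04 xi phi z ->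
  Im z < 0 /\ 0 < Re z ^ 2 < zeta1 xi ^ 2 / 4 /\ Im z ^ 2 <= tan phi ^ 2 * Re z ^ 2.
Proof.
intros [[Hu Hv] | [Hu Hv]]; [rewrite Rabs_left in Hv by lra|]; repeat split; nra.
Qed.

(* Half the bound of [quadratic_lower_bound] at S = zeta1^2; the other half absorbs
   the perturbation in [theta_poly_lower_bound]. *)
Definition theta_sign_const (xi : R) : R := 3 * zeta1 xi ^ 2 * (- xi - 6) / 8.

Lemma Re_2i_theta_sector xi T z :
  xi < -6 -> 0 <= T <= 1 -> T * (19 - 3 * xi) <= theta_sign_const xi ->
  0 < Re z ^ 2 < zeta1 xi ^ 2 / 4 -> Im z ^ 2 <= T * Re z ^ 2 ->
  exists g, theta_sign_const xi <= g /\ Re (2 * Ci * theta xi z)%C = Im z * g.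
Proof.
destruct z as [u v]; cbn [Re Im fst snd].
intros Hxi HT HTc Hu Hv.
destruct (zeta1_sqr_spec xi Hxi) as [HS Hroot].
unfold theta_sign_const in *; set (S := zeta1 xi ^ 2) in *.
eexists; split; [|apply Re_2i_theta; pose proof (pow2_ge_0 v); lra].
assert (Hq : 3 * S / 4 * (- xi - 6) <= 3 * (u ^ 2) ^ 2 + xi * u ^ 2 + 3)
  by (apply quadratic_lower_bound; lra).
assert (HP := theta_poly_lower_bound xi (u ^ 2) (v ^ 2) T Hxi ltac:(lra) HT
                ltac:(split; [apply pow2_ge_0 | lra])).
apply theta_ratio_lower_bound; [lra | split; [apply pow2_ge_0 | nra] | nra |].
eapply Rle_trans; [|exact HP].
rewrite Rmult_comm; apply Rmult_le_compat_l; lra.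
Qed.

Theorem mainTheorem4 (xi : R) (hxi : xi < -6) :
  exists phi0 : R, 0 < phi0 <= PI / 4 /\
    forall phi : R, 0 < phi <= phi0 ->
      exists c : R, 0 < c /\
        (forall z : C, Omega01 xi phi z \/ Omega02 xi phi z ->
           Re (2 * Ci * theta xi z)%C >= c * Rabs (Im z)) /\
        (forall z : C, Omega03 xi phi z \/ Omega04 xi phi z ->
           Re (2 * Ci * theta xi z)%C <= - (c * Rabs (Im z))).
Proof.
destruct (zeta1_sqr_spec xi hxi) as [HS _].
assert (Hc : 0 < theta_sign_const xi) by (unfold theta_sign_const; nra).
destruct (small_angle_tan_sqr (theta_sign_const xi / (19 - 3 * xi)))
  as (phi0 & Hphi0 & Hsmall); [apply Rdiv_lt_0_compat; lra|].
exists phi0; split; [exact Hphi0|].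
intros phi Hphi; destruct (Hsmall phi Hphi) as [HT HTa].
assert (HTc : tan phi ^ 2 * (19 - 3 * xi) <= theta_sign_const xi).
{ apply Rle_trans with (theta_sign_const xi / (19 - 3 * xi) * (19 - 3 * xi));
    [apply Rmult_le_compat_r; lra | right; field; lra]. }
exists (theta_sign_const xi); split; [exact Hc|]; split; intros z Hz.
- destruct (Omega_upper_sector _ _ _ Hz) as (Hv & Hu & Hsec).
  destruct (Re_2i_theta_sector xi _ z hxi HT HTc Hu Hsec) as (g & Hg & ->).
  rewrite Rabs_pos_eq by lra; nra.
- destruct (Omega_lower_sector _ _ _ Hz) as (Hv & Hu & Hsec).
  destruct (Re_2i_theta_sector xi _ z hxi HT HTc Hu Hsec) as (g & Hg & ->).
  rewrite Rabs_left by lra; nra.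
Qed.
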